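(* Let $T>0$, $\theta\ge0$, and let $g:[-T,T)^d\times[-T,T)^d\to\mathbb C$ be symmetric and $\theta$-biadditive in $[-T,T)^d\times[-T,T)^d$. Then there is a symmetric, biadditive function $G$ in $[-T,T)^d\times[-T,T)^d$ such that $$|g({\bf x},{\bf y})-G({\bf x},{\bf y})|\le(7d^2-1)\theta\quad\text{for all }{\bf x},{\bf y}\in[-T,T)^d.$$ Moreover, if the projections of $g({\bf x},{\bf y})$ onto each coordinate (i.e. the functions $(x,y)\mapsto g(x{\bf e}_i,y{\bf e}_k)$) are continuous in at least one point (with respect to both arguments), then $G$ is continuous and bilinear in $[-T,T)^d\times[-T,T)^d$.
   Context: ${\bf e}_i$ is the $i$-th standard basis vector. For $\mathcal E\subseteq\mathbb R^d$, $g$ is $\theta$-biadditive in $\mathcal E\times\mathcal E$ if $|g({\bf x}_1+{\bf x}_2,{\bf y})-g({\bf x}_1,{\bf y})-g({\bf x}_2,{\bf y})|\le\theta$ and $|g({\bf x},{\bf y}_1+{\bf y}_2)-g({\bf x},{\bf y}_1)-g({\bf x},{\bf y}_2)|\le\theta$ for all ${\bf x}_1,{\bf x}_2,{\bf y},{\bf x},{\bf y}_1,{\bf y}_2\in\mathcal E$ with ${\bf x}_1+{\bf x}_2\in\mathcal E$ and ${\bf y}_1+{\bf y}_2\in\mathcal E$; biadditive means $0$-biadditive; symmetric means $g({\bf x},{\bf y})=g({\bf y},{\bf x})$ for all ${\bf x},{\bf y}\in\mathcal E$. *)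

From HB Require Import structures.
From mathcomp Require Import all_boot all_order all_algebra.
From mathcomp Require Import all_classical all_reals all_analysis.
From mathcomp Require Import complex.
Set Implicit Arguments. Unset Strict Implicit. Unset Printing Implicit Defensive.
Import Order.TTheory GRing.Theory Num.Theory.
Import numFieldTopology.Exports numFieldNormedType.Exports.
Local Open Scope classical_set_scope.
Local Open Scope ring_scope.

Definition box (R : realType) (d : nat) (T : R) : set 'rV[R]_d :=
  [set x | forall i : 'I_d, -T <= x ord0 i < T].

Arguments box {R} d T.

Definition ebasis (R : realType) (d : nat) (i : 'I_d) : 'rV[R]_d :=
  delta_mx ord0 i.

Arguments ebasis {R d} i.

Definition biadditive_approx (R : realType) (d : nat) (E : set 'rV[R]_d)
  (theta : R) (g : 'rV[R]_d -> 'rV[R]_d -> R[i]) : Prop :=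
  (forall x1 x2 y, E x1 -> E x2 -> E y -> E (x1 + x2) ->
     `|g (x1 + x2) y - g x1 y - g x2 y| <= (theta%:C)%C) /\
  (forall x y1 y2, E x -> E y1 -> E y2 -> E (y1 + y2) ->
     `|g x (y1 + y2) - g x y1 - g x y2| <= (theta%:C)%C).

Definition biadditive_on (R : realType) (d : nat) (E : set 'rV[R]_d)
  (g : 'rV[R]_d -> 'rV[R]_d -> R[i]) : Prop :=
  biadditive_approx E 0 g.

Definition symmetric_on (R : realType) (d : nat) (E : set 'rV[R]_d)
  (g : 'rV[R]_d -> 'rV[R]_d -> R[i]) : Prop :=
  forall x y, E x -> E y -> g x y = g y x.

Definition bilinear_on (R : realType) (d : nat) (E : set 'rV[R]_d)
  (g : 'rV[R]_d -> 'rV[R]_d -> R[i]) : Prop :=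
  biadditive_on E g /\
  (forall (c : R) x y, E x -> E (c *: x) -> E y -> g (c *: x) y = (c%:C)%C * g x y) /\
  (forall (c : R) x y, E x -> E y -> E (c *: y) -> g x (c *: y) = (c%:C)%C * g x y).

(* The complex numbers R[i] carry the topology of their (numeric) norm,
   exactly as MathComp-Analysis does generically for numFieldType's. *)
HB.instance Definition _ (R : rcfType) := PseudoPointedMetric.copy R[i] (R[i])^o.

From HB Require Import structures.
From mathcomp Require Import all_boot all_order all_algebra.
From mathcomp Require Import all_classical all_reals all_analysis.
From mathcomp Require Import complex.
From mathcomp Require Import ring lra.
Import Order.TTheory GRing.Theory Num.Theory.
Import numFieldTopology.Exports numFieldNormedType.Exports.
Local Open Scope classical_set_scope.
Local Open Scope ring_scope.
Local Open Scope complex_scope.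
Set Implicit Arguments. Unset Strict Implicit. Unset Printing Implicit Defensive.

(* Hyers' direct method, one variable at a time.  A theta-additive phi on
   [-T, T) extends, through s = r + m T with 0 <= r < T, to a 2 theta-additive
   function on the whole line, and 2^-n phi(2^n s) then converges at rate 2^-n
   to an additive function within 3 theta of phi.  Doing this in s and then in t
   for each coordinate projection g(s e_i, t e_k) gives biadditive B_ik within
   6 theta of it: the defect of the first limit in t is itself the limit of a
   theta-bounded function, hence at most |s|/T theta <= theta.  Splitting x and
   y into coordinates costs (d - 1) theta + d (d - 1) theta, so
   sum_ik B_ik(x_i, y_k) is within (7 d^2 - 1) theta of g, and G is its
   symmetrisation.  Continuity of a projection at one point bounds B_ik on a
   small rectangle, and a biadditive function bounded on a rectangle is
   bilinear, so G is then a continuous bilinear form. *)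

Section ComplexNorm.
Variable R : realType.
Local Notation C := R[i].
Local Notation normc := (@Normc.normc R).

Lemma normc_ge0 (z : C) : 0 <= normc z.
Proof. by rewrite -ler0c; exact: (normr_ge0 z). Qed.

Lemma normc_real (x : R) : normc x%:C = `|x|.
Proof. by rewrite /Normc.normc /= expr0n /= addr0 sqrtr_sqr. Qed.

Lemma lecR_normc (z : C) (c : R) : (`|z| <= c%:C) = (normc z <= c).
Proof. exact: lecR. Qed.

Lemma normc_sum_le (I : finType) (F : I -> C) (c : R) :
  (forall i, normc (F i) <= c) -> normc (\sum_i F i) <= #|I|%:R * c.
Proof.
move=> F_le; rewrite mulr_natl -sumr_const.
elim/big_rec2: _ => [|i y z _ h]; first by rewrite Normc.normc0.
by apply: le_trans (le_normcD _ _) _; rewrite lerD.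
Qed.

Lemma abs_Re_le_normc (z : C) : `|complex.Re z| <= normc z.
Proof.
case: z => a b; rewrite /Normc.normc /= -sqrtr_sqr.
by apply: ler_wsqrtr; rewrite lerDl sqr_ge0.
Qed.

Lemma abs_Im_le_normc (z : C) : `|complex.Im z| <= normc z.
Proof.
case: z => a b; rewrite /Normc.normc /= -sqrtr_sqr.
by apply: ler_wsqrtr; rewrite lerDr sqr_ge0.
Qed.

Lemma normc_le_ReIm (z : C) : normc z <= `|complex.Re z| + `|complex.Im z|.
Proof.
have normc_i : normc 'i = 1 by rewrite /Normc.normc /= expr0n add0r expr1n sqrtr1.
rewrite [X in normc X]complexE; apply: le_trans (le_normcD _ _) _.
by rewrite Normc.normcM normc_i mul1r !normc_real.
Qed.

Lemma cvg_within_close (F : R * R -> C) (S : set (R * R)) (a b : R) :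
  F @ within S (nbhs (a, b)) --> F (a, b) ->
  exists2 e : R, 0 < e & forall s t, `|a - s| < e -> `|b - t| < e -> S (s, t) ->
    normc (F (a, b) - F (s, t)) < 1.
Proof.
move=> /(@cvgrPdist_lt C (C^o)) /(_ 1 ltr01).
rewrite /within /= => /nbhs_ballP [e /= e_gt0 near_ab].
exists e => // s t ast bst Sst.
by have := near_ab (s, t); rewrite -ltcR rmorph1; apply.
Qed.

End ComplexNorm.

Section GeometricLimit.
Variable R : realType.
Local Notation C := R[i].
Local Notation normc := (@Normc.normc R).

Lemma le_geom_slack (x a c : R) : (forall n, x <= a + c / 2 ^+ n) -> x <= a.
Proof.
move=> h; rewrite leNgt; apply/negP => ax.
have c_ge0 : 0 <= c by have := h 0%N; rewrite expr0 divr1; lra.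
pose k := Num.Def.archi_bound (c / (x - a)).
have ck : c / (x - a) < k%:R by apply: archi_boundP; rewrite divr_ge0 // subr_ge0 ltW.
have k2k : (k%:R : R) <= 2 ^+ k.
  by rewrite -natrX ler_nat; apply: ltnW; rewrite ltn_expl.
have p_gt0 : 0 < (2 ^+ k : R) by rewrite exprn_gt0.
have : c < 2 ^+ k * (x - a) by rewrite -ltr_pdivrMr ?subr_gt0 //; apply: lt_le_trans ck k2k.
have : x - a <= c / 2 ^+ k by have := h k; lra.
rewrite ler_pdivlMr //; nra.
Qed.

(* [r n - 2K/2^n] increases, [r n + 2K/2^n] decreases, and L is the sup of the former. *)
Lemma real_geom_cauchy (r : nat -> R) (K : R) :
  (forall n, `|r n.+1 - r n| <= K / 2 ^+ n) ->
  exists L, forall n, `|r n - L| <= 2 * K / 2 ^+ n.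
Proof.
move=> h.
pose a n := r n - 2 * K / 2 ^+ n; pose b n := r n + 2 * K / 2 ^+ n.
have half n : 2 * K / 2 ^+ n.+1 = K / 2 ^+ n.
  by rewrite exprS; field; rewrite expf_neq0 ?pnatr_eq0.
have K_ge0 : 0 <= K by have := le_trans (normr_ge0 _) (h 0%N); rewrite expr0 divr1.
have a_incr : nondecreasing_seq a.
  apply/nondecreasing_seqP => n; rewrite /a half.
  by have := h n; rewrite ler_norml; lra.
have b_decr n m : (n <= m)%N -> b m <= b n.
  elim: m => [|m IH]; first by rewrite leqn0 => /eqP ->.
  rewrite leq_eqVlt => /orP[/eqP -> //|/IH]; apply: le_trans.
  by rewrite /b half; have := h m; rewrite ler_norml; lra.
have ab n : a n <= b n.
  have : 0 <= 2 * K / 2 ^+ n by rewrite divr_ge0 ?mulr_ge0 ?exprn_ge0.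
  rewrite /a /b; lra.
have a_le_b m n : a m <= b n.
  case: (leqP m n) => mn; first exact: le_trans (a_incr _ _ mn) (ab n).
  exact: le_trans (ab m) (b_decr _ _ (ltnW mn)).
have ub n : ubound (range a) (b n) by move=> _ [m _ <-]; exact: a_le_b.
have supa : has_sup (range a) by split; [exists (a 0%N), 0%N | exists (b 0%N); exact: ub].
exists (sup (range a)) => n; rewrite ler_norml.
have : a n <= sup (range a) by apply: sup_upper_bound => //; exists n.
have : sup (range a) <= b n by apply: ge_sup; [case: supa | exact: ub].
rewrite /a /b; lra.
Qed.

Definition geom_limit (u : nat -> C) (L : C) :=
  exists c : R, forall n, normc (u n - L) <= c / 2 ^+ n.

Definition glim (u : nat -> C) : C := xget 0 (geom_limit u).

Lemma geom_limit_le u L v (a c : R) : geom_limit u L ->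
  (forall n, normc (u n - v) <= a + c / 2 ^+ n) -> normc (L - v) <= a.
Proof.
move=> [c' uL] h; apply: (@le_geom_slack _ _ (c + c')) => n.
have -> : L - v = (u n - v) - (u n - L) by ring.
apply: le_trans (le_normcD _ _) _; rewrite normcN mulrDl addrA.
exact: lerD.
Qed.

Lemma geom_limit_unique u L M : geom_limit u L -> geom_limit u M -> L = M.
Proof.
move=> uL [c uM]; apply/eqP; rewrite -subr_eq0; apply/eqP/Normc.eq0_normc.
apply/le_anti; rewrite normc_ge0 andbT.
by apply: (geom_limit_le (a := 0) uL) => n; rewrite add0r; exact: uM.
Qed.

Lemma glimE u L : geom_limit u L -> glim u = L.
Proof.
move=> uL; have uglim : geom_limit u (glim u) by apply: xgetPex; exists L.
exact: geom_limit_unique uglim uL.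
Qed.

Lemma geom_limit_glim u (K : R) :
  (forall n, normc (u n.+1 - u n) <= K / 2 ^+ n) -> geom_limit u (glim u).
Proof.
move=> h; apply: xgetPex.
have [Lr hr] : exists Lr, forall n, `|complex.Re (u n) - Lr| <= 2 * K / 2 ^+ n.
  apply: real_geom_cauchy => n.
  have -> : complex.Re (u n.+1) - complex.Re (u n) = complex.Re (u n.+1 - u n).
    by case: (u n.+1) (u n) => ? ? [].
  exact: le_trans (abs_Re_le_normc _) (h n).
have [Li hi] : exists Li, forall n, `|complex.Im (u n) - Li| <= 2 * K / 2 ^+ n.
  apply: real_geom_cauchy => n.
  have -> : complex.Im (u n.+1) - complex.Im (u n) = complex.Im (u n.+1 - u n).
    by case: (u n.+1) (u n) => ? ? [].
  exact: le_trans (abs_Im_le_normc _) (h n).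
exists (Complex Lr Li), (2 * K + 2 * K) => n.
apply: le_trans (normc_le_ReIm _) _; rewrite mulrDl.
by apply: lerD; [move: (hr n) | move: (hi n)]; case: (u n).
Qed.

Lemma geom_limitD u v L M : geom_limit u L -> geom_limit v M ->
  geom_limit (fun n => u n + v n) (L + M).
Proof.
move=> [c uL] [c' vM]; exists (c + c') => n; rewrite mulrDl.
have -> : u n + v n - (L + M) = (u n - L) + (v n - M) by ring.
by apply: le_trans (le_normcD _ _) _; apply: lerD.
Qed.

Lemma geom_limitN u L : geom_limit u L -> geom_limit (fun n => - u n) (- L).
Proof. by move=> [c uL]; exists c => n; rewrite -opprD normcN. Qed.

End GeometricLimit.

Section AdditiveBounded.
Variable R : realType.
Local Notation C := R[i].
Local Notation normc := (@Normc.normc R).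

Lemma additive_mulrz (D : R -> C) : {morph D : x y / x + y} ->
  forall (m : int) x, D (m%:~R * x) = m%:~R * D x.
Proof.
move=> D_add m x.
have D_sub : zmod_morphism D by move=> u v; apply: (addIr (D v)); rewrite -D_add !subrK.
pose Da : {additive R -> C} := HB.pack D (GRing.isZmodMorphism.Build _ _ D D_sub).
by rewrite -[D]/(Da : _ -> _) mulrzl raddfMz -mulrzl.
Qed.

(* [E] kills [l / 2^k], and every [x] is an integer multiple of [l / 2^k] plus a
   remainder [r] with [0 <= 2^k r <= l], so that [|E x| <= K / 2^k]. *)
Lemma additive_bounded_vanish (E : R -> C) (l K : R) : 0 < l ->
  {morph E : x y / x + y} -> E l = 0 ->
  (forall x, 0 <= x <= l -> normc (E x) <= K) -> forall x, E x = 0.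
Proof.
move=> l_gt0 E_add El E_le x; apply/Normc.eq0_normc/le_anti.
rewrite normc_ge0 andbT; apply: (@le_geom_slack _ _ _ K) => k; rewrite add0r.
have p_gt0 : 0 < (2 ^+ k : R) by rewrite exprn_gt0.
have E2k z : E (2 ^+ k * z) = 2 ^+ k * E z.
  by have := additive_mulrz E_add (2 ^ k)%N z; rewrite -!pmulrn !natrX.
pose y := l / 2 ^+ k; have y_gt0 : 0 < y by rewrite divr_gt0.
have Ey : E y = 0.
  have := E2k y; rewrite /y mulrC divfK ?gt_eqF // El => /esym/eqP.
  by rewrite mulf_eq0 expf_eq0 pnatr_eq0 andbF => /eqP.
pose m := Num.floor (x / y); pose r := x - m%:~R * y.
have /andP[r_ge0 r_lty] : 0 <= r < y.
  have /andP[] := floor_itv (x / y); rewrite intrD mulr1z.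
  rewrite ler_pdivlMr // ltr_pdivrMr // mulrDl mul1r /r => ? ?.
  by apply/andP; split; lra.
have -> : x = m%:~R * y + r by rewrite /r; ring.
rewrite E_add additive_mulrz // Ey mulr0 add0r.
have : normc (E (2 ^+ k * r)) <= K.
  apply: E_le; rewrite mulr_ge0 ?exprn_ge0 //=.
  by rewrite -ler_pdivlMl // mulrC ltW.
have two_k : (2 ^+ k : C) = (2 ^+ k : R)%:C by rewrite rmorphXn rmorph_nat.
rewrite E2k two_k Normc.normcM normc_real ger0_norm ?exprn_ge0 //.
by rewrite ler_pdivlMr // mulrC.
Qed.

Lemma additive_bounded_linear (D : R -> C) (a l M : R) : 0 < l ->
  {morph D : x y / x + y} -> (forall x, a <= x <= a + l -> normc (D x) <= M) ->
  forall x, D x = x%:C * D 1.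
Proof.
move=> l_gt0 D_add D_le.
pose c := (l^-1)%:C * D l; pose E x := D x - x%:C * c.
have E_add : {morph E : x y / x + y}.
  by move=> x y; rewrite /E D_add rmorphD /=; ring.
have El : E l = 0.
  by rewrite /E /c mulrA -rmorphM /= divff ?gt_eqF // rmorph1 mul1r subrr.
have E_le x : 0 <= x <= l -> normc (E x) <= 2 * M + l * normc c.
  move=> /andP[x_ge0 x_lel].
  have -> : E x = D (a + x) - D a - x%:C * c by rewrite /E D_add; ring.
  apply: le_trans (le_normcD _ _) _; rewrite normcN Normc.normcM normc_real.
  apply: lerD; last by rewrite ler_wpM2r ?normc_ge0 // ger0_norm.
  apply: le_trans (le_normcD _ _) _; rewrite normcN mulr2n mulrDl mul1r.
  by apply: lerD; apply: D_le; apply/andP; split; lra.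
have E0 := additive_bounded_vanish l_gt0 E_add El E_le.
have D_lin x : D x = x%:C * c by apply/eqP; rewrite -subr_eq0 -/(E x) E0.
by move=> x; rewrite !D_lin rmorph1 mul1r.
Qed.

Lemma additive_bounded_slope (D : R -> C) (a l M : R) : 0 < l ->
  {morph D : x y / x + y} -> (forall x, a <= x <= a + l -> normc (D x) <= M) ->
  normc (D 1) <= 2 * M / l.
Proof.
move=> l_gt0 D_add D_le; rewrite ler_pdivlMr // mulrC.
rewrite -[l in l * _]gtr0_norm // -normc_real -Normc.normcM.
rewrite -(additive_bounded_linear l_gt0 D_add D_le).
have -> : D l = D (a + l) - D a by rewrite D_add; ring.
apply: le_trans (le_normcD _ _) _; rewrite normcN mulr2n mulrDl mul1r.
by apply: lerD; apply: D_le; apply/andP; split; lra.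
Qed.

Lemma biadditive_bounded_bilinear (B : R -> R -> C) (a b la lb M : R) :
  0 < la -> 0 < lb ->
  (forall t, {morph B^~ t : x y / x + y}) -> (forall s, {morph B s : x y / x + y}) ->
  (forall s t, a <= s <= a + la -> b <= t <= b + lb -> normc (B s t) <= M) ->
  forall s t, B s t = (s * t)%:C * B 1 1.
Proof.
move=> la_gt0 lb_gt0 B_addl B_addr B_le.
have lin_t s : a <= s <= a + la -> forall t, B s t = t%:C * B s 1.
  by move=> Is; apply: (@additive_bounded_linear _ b lb M lb_gt0 (B_addr s)) => t; apply: B_le.
have slope_s s : a <= s <= a + la -> normc (B s 1) <= 2 * M / lb.
  by move=> Is; apply: (@additive_bounded_slope _ b lb M lb_gt0 (B_addr s)) => t; apply: B_le.
have lin_s t s : B s t = s%:C * B 1 t.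
  apply: (@additive_bounded_linear _ a la (`|t| * (2 * M / lb)) la_gt0 (B_addl t)).
  move=> {}s Is.
  by rewrite lin_t // Normc.normcM normc_real ler_wpM2l ?slope_s.
have lin_1 t : B 1 t = t%:C * B 1 1.
  apply: (@additive_bounded_linear _ b lb (2 * M / la) lb_gt0 (B_addr 1)).
  move=> {}t It.
  by apply: (@additive_bounded_slope _ a la M la_gt0 (B_addl t)) => s Is; apply: B_le.
by move=> s t; rewrite lin_s lin_1 rmorphM mulrA.
Qed.

End AdditiveBounded.

Section Hyers.
Variables (R : realType) (T : R).
Hypothesis T_gt0 : 0 < T.
Local Notation C := R[i].
Local Notation normc := (@Normc.normc R).
Local Ltac lraT := have := T_gt0; lra.

Definition almost_additive (th : R) (phi : R -> C) :=
  forall a b : R, -T <= a < T -> -T <= b < T -> -T <= a + b < T ->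
    normc (phi (a + b) - phi a - phi b) <= th.

Lemma almost_additive_ge0 th phi : almost_additive th phi -> 0 <= th.
Proof.
have I0 : -T <= 0 < T by apply/andP; split; lraT.
by move/(_ 0 0 I0 I0); rewrite addr0 => /(_ I0); apply: le_trans; exact: normc_ge0.
Qed.

Lemma almost_additiveB th th' phi psi : almost_additive th phi ->
  almost_additive th' psi -> almost_additive (th + th') (fun x => phi x - psi x).
Proof.
move=> phi_add psi_add a b Ia Ib Iab.
have -> : phi (a + b) - psi (a + b) - (phi a - psi a) - (phi b - psi b) =
  (phi (a + b) - phi a - phi b) - (psi (a + b) - psi a - psi b) by ring.
by apply: le_trans (le_normcD _ _) _; rewrite normcN lerD ?phi_add ?psi_add.
Qed.

Definition floorT (s : R) : R := (Num.floor (s / T))%:~R.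

Lemma floorT_rem s : 0 <= s - floorT s * T < T.
Proof.
have /andP[] := floor_itv (s / T); rewrite /floorT intrD mulr1z.
rewrite ler_pdivlMr // ltr_pdivrMr // mulrDl mul1r => ? ?.
by apply/andP; split; lraT.
Qed.

Lemma floorT_shift (r : R) (m : int) : 0 <= r < T -> floorT (r + m%:~R * T) = m%:~R.
Proof.
move=> /andP[r_ge0 r_ltT]; rewrite /floorT (@floor_def _ _ m) //.
rewrite intrD mulr1z ler_pdivlMr // ltr_pdivrMr // mulrDl mul1r.
by apply/andP; split; lraT.
Qed.

(* Writing s = r + m T with 0 <= r < T, the value of an additive function
   would be phi r + m phi T, and phi T is approximated by - phi (- T). *)
Definition extend (phi : R -> C) (s : R) : C :=
  phi (s - floorT s * T) - (floorT s)%:C * phi (- T).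

Lemma extend_shift phi (r : R) (m : int) : 0 <= r < T ->
  extend phi (r + m%:~R * T) = phi r - (m%:~R)%:C * phi (- T).
Proof. by move=> Ir; rewrite /extend floorT_shift // addrK. Qed.

Lemma extend_almost_additive th phi : almost_additive th phi ->
  forall a b : R, normc (extend phi (a + b) - extend phi a - extend phi b) <= 2 * th.
Proof.
move=> phi_add a b; have th_ge0 := almost_additive_ge0 phi_add.
set m := Num.floor (a / T); set n := Num.floor (b / T).
set r := a - floorT a * T; set u := b - floorT b * T.
have Ir : 0 <= r < T := floorT_rem a; have Iu : 0 <= u < T := floorT_rem b.
have ea : a = r + m%:~R * T by rewrite /r /floorT; ring.
have eb : b = u + n%:~R * T by rewrite /u /floorT; ring.
have ImT : -T <= - T < T by apply/andP; split; lraT.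
move: Ir Iu => /andP[r_ge0 r_ltT] /andP[u_ge0 u_ltT].
have -> : extend phi a = phi r - (m%:~R)%:C * phi (- T).
  by rewrite {1}ea extend_shift ?r_ge0.
have -> : extend phi b = phi u - (n%:~R)%:C * phi (- T).
  by rewrite {1}eb extend_shift ?u_ge0.
case: (ltP (r + u) T) => ru.
  have -> : a + b = (r + u) + (m + n)%:~R * T by rewrite ea eb intrD; ring.
  rewrite extend_shift; last by apply/andP; split; lraT.
  have -> : phi (r + u) - ((m + n)%:~R)%:C * phi (- T) - (phi r - (m%:~R)%:C * phi (- T))
      - (phi u - (n%:~R)%:C * phi (- T)) = phi (r + u) - phi r - phi u.
    by rewrite intrD rmorphD /=; ring.
  have : normc (phi (r + u) - phi r - phi u) <= th.
    by apply: phi_add; apply/andP; split; lraT.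
  lra.
have -> : a + b = (r + (u - T)) + (m + n + 1)%:~R * T by rewrite ea eb !intrD; ring.
rewrite extend_shift; last by apply/andP; split; lraT.
have -> : phi (r + (u - T)) - ((m + n + 1)%:~R)%:C * phi (- T)
    - (phi r - (m%:~R)%:C * phi (- T)) - (phi u - (n%:~R)%:C * phi (- T)) =
    (phi (r + (u - T)) - phi r - phi (u - T)) + (phi (u + - T) - phi u - phi (- T)).
  by rewrite !intrD !rmorphD /= rmorph1; ring.
apply: le_trans (le_normcD _ _) _; rewrite mulr2n mulrDl mul1r.
by apply: lerD; apply: phi_add => //; apply/andP; split; lraT.
Qed.

Definition hyers_seq (phi : R -> C) (s : R) (n : nat) : C :=
  ((2 ^+ n)^-1)%:C * extend phi (2 ^+ n * s).

Definition hyers (phi : R -> C) (s : R) : C := glim (hyers_seq phi s).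

Lemma hyers_seq_step th phi s n : almost_additive th phi ->
  normc (hyers_seq phi s n.+1 - hyers_seq phi s n) <= th / 2 ^+ n.
Proof.
move=> phi_add; rewrite /hyers_seq.
have p_gt0 : 0 < (2 ^+ n.+1 : R) by rewrite exprn_gt0.
set x := 2 ^+ n * s.
have -> : 2 ^+ n.+1 * s = x + x by rewrite exprS /x; ring.
have -> : ((2 ^+ n)^-1)%:C = ((2 ^+ n.+1)^-1)%:C * (2 : R)%:C.
  by rewrite -rmorphM /= exprS invfM mulrAC mulVf ?pnatr_eq0 ?mul1r.
rewrite -mulrA -mulrBr.
have -> : extend phi (x + x) - (2 : R)%:C * extend phi x =
    extend phi (x + x) - extend phi x - extend phi x.
  by rewrite rmorphMn rmorph1; ring.
rewrite Normc.normcM normc_real ger0_norm; last by rewrite invr_ge0 ltW.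
apply: le_trans (ler_wpM2l _ (extend_almost_additive phi_add x x)) _.
  by rewrite invr_ge0 ltW.
by rewrite exprS invfM mulrACA mulVf ?pnatr_eq0 // mul1r mulrC.
Qed.

Lemma hyers_limit th phi s : almost_additive th phi ->
  geom_limit (hyers_seq phi s) (hyers phi s).
Proof. by move=> phi_add; apply: geom_limit_glim => n; exact: hyers_seq_step phi_add. Qed.

Lemma hyers_extend th phi s : almost_additive th phi ->
  normc (hyers phi s - extend phi s) <= 2 * th.
Proof.
move=> phi_add; have th_ge0 := almost_additive_ge0 phi_add.
have seq0 : hyers_seq phi s 0 = extend phi s.
  by rewrite /hyers_seq expr0 invr1 mul1r mul1r.
apply: (geom_limit_le (c := - 2 * th) (hyers_limit s phi_add)) => n.
rewrite -seq0; elim: n => [|n IH]; first by rewrite subrr Normc.normc0 expr0; lra.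
have -> : hyers_seq phi s n.+1 - hyers_seq phi s 0 =
  (hyers_seq phi s n.+1 - hyers_seq phi s n) + (hyers_seq phi s n - hyers_seq phi s 0).
  by ring.
apply: le_trans (le_normcD _ _) _; have := hyers_seq_step s n phi_add.
have -> : - 2 * th / 2 ^+ n.+1 = - th / 2 ^+ n.
  by rewrite exprS; field; rewrite expf_neq0 ?pnatr_eq0.
move: IH; rewrite !mulNr; lra.
Qed.

Lemma hyers_additive th phi a b : almost_additive th phi ->
  hyers phi (a + b) = hyers phi a + hyers phi b.
Proof.
move=> phi_add; apply/eqP; rewrite -subr_eq0; apply/eqP.
apply: geom_limit_unique (geom_limitD (hyers_limit (a + b) phi_add)
  (geom_limitN (geom_limitD (hyers_limit a phi_add) (hyers_limit b phi_add)))) _.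
exists (2 * th) => n.
set x := 2 ^+ n * a; set y := 2 ^+ n * b.
have -> : hyers_seq phi (a + b) n + - (hyers_seq phi a n + hyers_seq phi b n) - 0 =
    ((2 ^+ n)^-1)%:C * (extend phi (x + y) - extend phi x - extend phi y).
  by rewrite /hyers_seq [2 ^+ n * (a + b)]mulrDr; ring.
rewrite Normc.normcM normc_real ger0_norm ?invr_ge0 ?exprn_ge0 // mulrC.
by rewrite ler_wpM2r ?invr_ge0 ?exprn_ge0 // extend_almost_additive.
Qed.

Lemma hyers_approx th phi s : almost_additive th phi -> -T <= s < T ->
  normc (phi s - hyers phi s) <= 3 * th.
Proof.
move=> phi_add /andP[s_geT s_ltT]; have th_ge0 := almost_additive_ge0 phi_add.
have := hyers_extend s phi_add.
case: (leP 0 s) => s0.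
  have := extend_shift phi (r := s) 0; rewrite mul0r addr0 rmorph0 mul0r subr0.
  by move=> -> //; [rewrite -normcN opprB; lraT | apply/andP].
have := extend_shift phi (r := s + T) (-1).
rewrite -[(-1)%:~R]/(-1 : R) mulN1r addrK rmorphN1 mulN1r opprK => -> //; last first.
  by apply/andP; split; lraT.
move=> ext_s.
have -> : phi s - hyers phi s =
  (phi (s + T + - T) - phi (s + T) - phi (- T)) - (hyers phi s - (phi (s + T) + phi (- T))).
  by rewrite addrK; ring.
have phi_s : normc (phi (s + T + - T) - phi (s + T) - phi (- T)) <= th.
  by apply: phi_add; apply/andP; split; lraT.
by apply: le_trans (le_normcD _ _) _; rewrite normcN; lra.
Qed.

Lemma hyers_eq_on phi psi s : (forall x : R, -T <= x < T -> phi x = psi x) ->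
  hyers phi s = hyers psi s.
Proof.
move=> phi_psi; congr glim; apply: funext => n; rewrite /hyers_seq /extend !phi_psi //.
  by apply/andP; split; lraT.
by have /andP[? ?] := floorT_rem (2 ^+ n * s); apply/andP; split; lraT.
Qed.

Lemma hyersD th th' phi psi s : almost_additive th phi -> almost_additive th' psi ->
  hyers (fun x => phi x + psi x) s = hyers phi s + hyers psi s.
Proof.
move=> phi_add psi_add; apply: glimE.
have -> : hyers_seq (fun x => phi x + psi x) s =
    (fun n => hyers_seq phi s n + hyers_seq psi s n).
  by apply: funext => n; rewrite /hyers_seq /extend; ring.
exact: geom_limitD (hyers_limit s phi_add) (hyers_limit s psi_add).
Qed.

Lemma hyersB th th' phi psi s : almost_additive th phi -> almost_additive th' psi ->
  hyers (fun x => phi x - psi x) s = hyers phi s - hyers psi s.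
Proof.
move=> phi_add psi_add; apply: glimE.
have -> : hyers_seq (fun x => phi x - psi x) s =
    (fun n => hyers_seq phi s n + - hyers_seq psi s n).
  by apply: funext => n; rewrite /hyers_seq /extend; ring.
exact: geom_limitD (hyers_limit s phi_add) (geom_limitN (hyers_limit s psi_add)).
Qed.

Lemma hyers_bound th phi (eps s : R) : almost_additive th phi ->
  (forall x : R, -T <= x < T -> normc (phi x) <= eps) -> normc (hyers phi s) <= `|s| / T * eps.
Proof.
move=> phi_add phi_le.
have eps_ge0 : 0 <= eps.
  by apply: le_trans (normc_ge0 _) (phi_le 0 _); apply/andP; split; lraT.
rewrite -[hyers phi s]subr0.
apply: (geom_limit_le (c := 2 * eps) (hyers_limit s phi_add)) => n; rewrite subr0.
have p_gt0 : 0 < (2 ^+ n : R) by rewrite exprn_gt0.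
rewrite /hyers_seq Normc.normcM normc_real ger0_norm; last by rewrite invr_ge0 ltW.
set x := 2 ^+ n * s.
have floor_le : `|floorT x| <= `|x| / T + 1.
  have /andP[? ?] := floorT_rem x.
  have : floorT x <= x / T by rewrite ler_pdivlMr //; lraT.
  have : x / T - 1 < floorT x by rewrite ltrBlDr ltr_pdivrMr // mulrDl mul1r; lraT.
  have : x / T <= `|x| / T by rewrite ler_pM2r ?invr_gt0 // ler_norm.
  have : - (x / T) <= `|x| / T by rewrite -mulNr ler_pM2r ?invr_gt0 // -normrN ler_norm.
  by rewrite ler_norml; lra.
have ext_le : normc (extend phi x) <= eps + (`|x| / T + 1) * eps.
  rewrite /extend; apply: le_trans (le_normcD _ _) _; rewrite normcN Normc.normcM normc_real.
  apply: lerD; first by apply/phi_le; have /andP[? ?] := floorT_rem x; apply/andP; split; lraT.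
  by apply: ler_pM => //; [exact: normc_ge0 | apply/phi_le/andP; split; lraT].
apply: le_trans (ler_wpM2l _ ext_le) _; first by rewrite invr_ge0 ltW.
rewrite /x normrM (ger0_norm (ltW p_gt0)).
suff -> : (2 ^+ n)^-1 * (eps + (2 ^+ n * `|s| / T + 1) * eps) =
  `|s| / T * eps + 2 * eps / 2 ^+ n by [].
by field; rewrite !gt_eqF.
Qed.

End Hyers.

Section BiHyers.
Variables (R : realType) (T : R).
Hypothesis T_gt0 : 0 < T.
Local Notation C := R[i].
Local Notation normc := (@Normc.normc R).
Variables (th : R) (f : R -> R -> C).
Hypothesis f_addl : forall t : R, -T <= t < T -> almost_additive T th (f^~ t).
Hypothesis f_addr : forall s : R, -T <= s < T -> almost_additive T th (f s).

Definition hyers_fst (s t : R) : C := hyers T (f^~ t) s.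
Definition bihyers (s t : R) : C := hyers T (hyers_fst s) t.

Lemma hyers_fst_almost_additive s : almost_additive T (`|s| / T * th) (hyers_fst s).
Proof.
move=> t1 t2 It1 It2 It12.
have f_addl2 := almost_additiveB (f_addl It12) (f_addl It1).
rewrite /hyers_fst -(hyersB T_gt0 _ (f_addl It12) (f_addl It1)).
rewrite -(hyersB T_gt0 _ f_addl2 (f_addl It2)).
apply: (hyers_bound T_gt0 _ (almost_additiveB f_addl2 (f_addl It2))) => x Ix.
exact: f_addr.
Qed.

Lemma bihyersDl s1 s2 t : bihyers (s1 + s2) t = bihyers s1 t + bihyers s2 t.
Proof.
rewrite /bihyers (@hyers_eq_on _ _ T_gt0 _ (fun t' => hyers_fst s1 t' + hyers_fst s2 t')).
  by rewrite (hyersD T_gt0 t (hyers_fst_almost_additive s1) (hyers_fst_almost_additive s2)).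
by move=> t' It'; rewrite /hyers_fst (hyers_additive T_gt0 s1 s2 (f_addl It')).
Qed.

Lemma bihyersDr s t1 t2 : bihyers s (t1 + t2) = bihyers s t1 + bihyers s t2.
Proof. by rewrite /bihyers (hyers_additive T_gt0 t1 t2 (hyers_fst_almost_additive s)). Qed.

Lemma bihyers_approx s t : -T <= s < T -> -T <= t < T ->
  normc (f s t - bihyers s t) <= 6 * th.
Proof.
move=> Is It; have th_ge0 := almost_additive_ge0 T_gt0 (f_addr Is).
have approx_s := hyers_approx T_gt0 (f_addl It) Is.
have approx_t := hyers_approx T_gt0 (hyers_fst_almost_additive s) It.
have s_th : `|s| / T * th <= th.
  rewrite ler_piMl // ler_pdivrMr // mul1r ler_norml.
  by case/andP: Is => ? ?; apply/andP; split; lra.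
have -> : f s t - bihyers s t = (f s t - hyers_fst s t) + (hyers_fst s t - bihyers s t).
  by ring.
by apply: le_trans (le_normcD _ _) _; rewrite /bihyers /hyers_fst in approx_t *; lra.
Qed.

Lemma bihyers_bilinear (a b : R) : -T <= a < T -> -T <= b < T ->
  (fun p : R * R => f p.1 p.2)
    @ within [set p : R * R | -T <= p.1 < T /\ -T <= p.2 < T] (nbhs (a, b)) --> f a b ->
  forall s t, bihyers s t = (s * t)%:C * bihyers 1 1.
Proof.
move=> /andP[a_geT a_ltT] /andP[b_geT b_ltT] /cvg_within_close[e e_gt0 f_near].
have th_ge0 : 0 <= th.
  by apply: (almost_additive_ge0 T_gt0 (f_addr (s := a) _)); apply/andP.
have small_step (c : R) : c < T -> exists l, [/\ 0 < l, l < e & c + l < T].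
  move=> c_ltT; exists (Num.min e (T - c) / 2).
  have : 0 < Num.min e (T - c) by rewrite lt_min e_gt0 subr_gt0.
  have : Num.min e (T - c) <= e by rewrite ge_min lexx.
  have : Num.min e (T - c) <= T - c by rewrite ge_min lexx orbT.
  by move=> *; split; lra.
have [la [la_gt0 la_e la_T]] := small_step a a_ltT.
have [lb [lb_gt0 lb_e lb_T]] := small_step b b_ltT.
apply: (biadditive_bounded_bilinear (a := a) (b := b) (M := normc (f a b) + 1 + 6 * th)
  la_gt0 lb_gt0).
- by move=> t s1 s2; exact: bihyersDl.
- by move=> s t1 t2; exact: bihyersDr.
move=> s t /andP[s_gea s_le] /andP[t_geb t_le].
have Is : -T <= s < T by apply/andP; split; lra.
have It : -T <= t < T by apply/andP; split; lra.
have f_st : normc (f a b - f s t) < 1.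
  apply: f_near => //; rewrite ltr_norml; apply/andP; split; lra.
have -> : bihyers s t = f a b - (f a b - f s t) - (f s t - bihyers s t) by ring.
apply: le_trans (le_normcD _ _) _; rewrite normcN.
apply: le_trans (lerD (le_normcD _ _) (lexx _)) _; rewrite normcN.
by have := bihyers_approx Is It; lra.
Qed.

End BiHyers.

Section BilinearForm.
Variables (R : realType) (d : nat).
Local Notation C := R[i].
Implicit Types (x y : 'rV[R]_d) (beta : 'I_d -> 'I_d -> C).

Lemma biadditive_on_morph (E : set 'rV[R]_d) (G : 'rV[R]_d -> 'rV[R]_d -> C) :
  (forall y, {morph G^~ y : x1 x2 / x1 + x2}) -> (forall x, {morph G x : y1 y2 / y1 + y2}) ->
  biadditive_on E G.
Proof.
by move=> G_addl G_addr; split=> *; rewrite (G_addl, G_addr) -addrA -opprD subrr normr0 rmorph0.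
Qed.

Definition bilin_form beta x y : C :=
  \sum_i \sum_k (x ord0 i * y ord0 k)%:C * beta i k.

Lemma bilin_formDl beta x1 x2 y :
  bilin_form beta (x1 + x2) y = bilin_form beta x1 y + bilin_form beta x2 y.
Proof.
rewrite /bilin_form -big_split; apply: eq_bigr => i _; rewrite -big_split.
by apply: eq_bigr => k _; rewrite mxE mulrDl rmorphD mulrDl.
Qed.

Lemma bilin_formDr beta x y1 y2 :
  bilin_form beta x (y1 + y2) = bilin_form beta x y1 + bilin_form beta x y2.
Proof.
rewrite /bilin_form -big_split; apply: eq_bigr => i _; rewrite -big_split.
by apply: eq_bigr => k _; rewrite mxE mulrDr rmorphD mulrDl.
Qed.

Lemma bilin_formZl beta (c : R) x y : bilin_form beta (c *: x) y = c%:C * bilin_form beta x y.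
Proof.
rewrite /bilin_form mulr_sumr; apply: eq_bigr => i _; rewrite mulr_sumr.
by apply: eq_bigr => k _; rewrite mxE -mulrA rmorphM mulrA.
Qed.

Lemma bilin_formZr beta (c : R) x y : bilin_form beta x (c *: y) = c%:C * bilin_form beta x y.
Proof.
rewrite /bilin_form mulr_sumr; apply: eq_bigr => i _; rewrite mulr_sumr.
by apply: eq_bigr => k _; rewrite mxE mulrCA rmorphM mulrA.
Qed.

Lemma bilin_form_bilinear_on beta (E : set 'rV[R]_d) : bilinear_on E (bilin_form beta).
Proof.
split; last by split=> *; [exact: bilin_formZl | exact: bilin_formZr].
by apply: biadditive_on_morph => [y x1 x2 | x y1 y2]; [exact: bilin_formDl | exact: bilin_formDr].
Qed.

Lemma bilin_form_symmetrize beta x y :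
  (bilin_form beta x y + bilin_form beta y x) / 2 =
  bilin_form (fun i k => (beta i k + beta k i) / 2) x y.
Proof.
rewrite [bilin_form beta y x]/bilin_form exchange_big /= /bilin_form -big_split.
rewrite mulr_suml; apply: eq_bigr => i _; rewrite -big_split mulr_suml.
by apply: eq_bigr => k _ /=; rewrite mulrC; ring.
Qed.

Lemma continuous_real_complex : continuous (fun x : R => x%:C).
Proof.
move=> x; apply/(@cvgrPdist_lt C C^o) => e e_gt0.
have [e_real e_re_gt0] : e = (complex.Re e)%:C /\ 0 < complex.Re e.
  by move: e_gt0; rewrite ltcE => /andP[/eqP e_im ->]; case: e e_im => ? ? /= ->.
near=> t; rewrite e_real -rmorphB /= ltcR normc_real.
by near: t; apply: (@cvgrPdist_lt R R^o _ _ _ _ _).1 (@cvg_id _ (nbhs x)) _ e_re_gt0.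
Unshelve. all: by end_near.
Qed.

Lemma continuous_bilin_form beta :
  continuous (fun p : 'rV[R]_d * 'rV[R]_d => bilin_form beta p.1 p.2).
Proof.
apply: (continuous_big (@add_continuous C^o)) => i _.
apply: (continuous_big (@add_continuous C^o)) => k _ p.
have := @continuousM C _ (fun q : 'rV[R]_d * 'rV[R]_d => (q.1 ord0 i * q.2 ord0 k)%:C)
  (fun=> beta i k) p.
apply; last exact: cst_continuous.
apply: continuous_comp; last exact: continuous_real_complex.
have := @continuousM R _ (fun q : 'rV[R]_d * 'rV[R]_d => q.1 ord0 i) (fun q => q.2 ord0 k) p.
apply.
  by apply: (@continuous_comp _ _ _ fst (fun x : 'rV[R]_d => x ord0 i));
    [exact: cvg_fst | exact: coord_continuous].
by apply: (@continuous_comp _ _ _ snd (fun y : 'rV[R]_d => y ord0 k));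
  [exact: cvg_snd | exact: coord_continuous].
Qed.

End BilinearForm.

Section Box.
Variables (R : realType) (d : nat) (T th : R) (g : 'rV[R]_d -> 'rV[R]_d -> R[i]).
Hypotheses (T_gt0 : 0 < T) (g_add : biadditive_approx (box d T) th g).
Local Notation C := R[i].
Local Notation normc := (@Normc.normc R).
Local Notation box := (box d T).

Definition coord_proj (i k : 'I_d) (s t : R) : C := g (s *: ebasis i) (t *: ebasis k).

Lemma box_scale_ebasis (i : 'I_d) (s : R) : -T <= s < T -> box (s *: ebasis i).
Proof.
move=> Is j; rewrite !mxE eqxx /=; case: eqP => _; first by rewrite mulr1.
by rewrite mulr0 oppr_le0 (ltW T_gt0) T_gt0.
Qed.

Lemma coord_proj_addl i k (t : R) : -T <= t < T -> almost_additive T th (coord_proj i k ^~ t).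
Proof.
move=> It a b Ia Ib Iab; rewrite /coord_proj scalerDl -lecR_normc.
by apply: g_add.1; rewrite -?scalerDl; exact: box_scale_ebasis.
Qed.

Lemma coord_proj_addr i k (s : R) : -T <= s < T -> almost_additive T th (coord_proj i k s).
Proof.
move=> Is a b Ia Ib Iab; rewrite /coord_proj scalerDl -lecR_normc.
by apply: g_add.2; rewrite -?scalerDl; exact: box_scale_ebasis.
Qed.

Definition coord_part (x : 'rV[R]_d) (i : 'I_d) : 'rV[R]_d := x ord0 i *: ebasis i.

Lemma coord_part_sum_box x (r : seq 'I_d) : box x -> uniq r ->
  box (\sum_(i <- r) coord_part x i).
Proof.
have I0 : -T <= 0 < T by rewrite oppr_le0 (ltW T_gt0) T_gt0.
move=> bx r_uniq j; have -> : (\sum_(i <- r) coord_part x i) ord0 j =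
    if j \in r then x ord0 j else 0.
  elim: r r_uniq => [|i r IH /andP[i_r r_uniq]]; first by rewrite big_nil mxE.
  rewrite big_cons mxE IH // !mxE eqxx /= in_cons.
  case: (eqVneq j i) => [->|ji] /=; first by rewrite (negPf i_r) mulr1 addr0.
  by rewrite mulr0 add0r.
by case: ifP.
Qed.

Lemma almost_additive_coord_sum (phi : 'rV[R]_d -> C) x (r : seq 'I_d) :
  (forall x1 x2, box x1 -> box x2 -> box (x1 + x2) ->
     normc (phi (x1 + x2) - phi x1 - phi x2) <= th) ->
  box x -> uniq r -> r != [::] ->
  normc (phi (\sum_(i <- r) coord_part x i) - \sum_(i <- r) phi (coord_part x i))
    <= (size r).-1%:R * th.
Proof.
move=> phi_add bx; elim: r => [//|i [|j r] IH] /andP[i_r] r_uniq _.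
  by rewrite !big_cons !big_nil !addr0 subrr Normc.normc0 mul0r.
rewrite big_cons [X in _ - X]big_cons.
set S := \sum_(l <- j :: r) coord_part x l; set P := \sum_(l <- j :: r) phi (coord_part x l).
have -> : phi (coord_part x i + S) - (phi (coord_part x i) + P) =
   (phi (coord_part x i + S) - phi (coord_part x i) - phi S) + (phi S - P) by ring.
apply: le_trans (le_normcD _ _) _; rewrite /= -natr1 mulrDl mul1r addrC.
apply: lerD; first by have := IH r_uniq isT.
have box_iS : box (coord_part x i + S).
  have := coord_part_sum_box bx (r := i :: j :: r); rewrite big_cons; apply.
  by rewrite /= i_r.
apply: phi_add box_iS; first exact/box_scale_ebasis/bx.
exact: coord_part_sum_box.
Qed.

Lemma almost_additive_coord_approx (phi : 'rV[R]_d -> C) x : (0 < d)%N ->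
  (forall x1 x2, box x1 -> box x2 -> box (x1 + x2) ->
     normc (phi (x1 + x2) - phi x1 - phi x2) <= th) ->
  box x -> normc (phi x - \sum_i phi (coord_part x i)) <= d.-1%:R * th.
Proof.
move=> d_gt0 phi_add bx.
have enum_nil : enum 'I_d != [::] by rewrite -size_eq0 size_enum_ord -lt0n.
have := almost_additive_coord_sum phi_add bx (enum_uniq _) enum_nil.
rewrite !big_enum /= size_enum_ord; congr (normc (phi _ - _) <= _).
by rewrite [RHS]row_sum_delta.
Qed.

Definition bihyers_sum (x y : 'rV[R]_d) : C :=
  \sum_i \sum_k bihyers T (coord_proj i k) (x ord0 i) (y ord0 k).

Lemma bihyers_sumDl x1 x2 y : bihyers_sum (x1 + x2) y = bihyers_sum x1 y + bihyers_sum x2 y.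
Proof.
rewrite /bihyers_sum -big_split; apply: eq_bigr => i _; rewrite -big_split.
apply: eq_bigr => k _; rewrite mxE.
by rewrite (bihyersDl T_gt0 (coord_proj_addl i k) (coord_proj_addr i k)).
Qed.

Lemma bihyers_sumDr x y1 y2 : bihyers_sum x (y1 + y2) = bihyers_sum x y1 + bihyers_sum x y2.
Proof.
rewrite /bihyers_sum -big_split; apply: eq_bigr => i _; rewrite -big_split.
apply: eq_bigr => k _; rewrite mxE.
by rewrite (bihyersDr T_gt0 (coord_proj_addl i k) (coord_proj_addr i k)).
Qed.

Lemma bihyers_sum_approx x y : (0 < d)%N -> box x -> box y ->
  normc (g x y - bihyers_sum x y) <= ((7 * d ^ 2)%N%:R - 1) * th.
Proof.
move=> d_gt0 bx bY.
pose P i := coord_part x i; pose Q k := coord_part y k.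
have split_x : normc (g x y - \sum_i g (P i) y) <= d.-1%:R * th.
  apply: (almost_additive_coord_approx (phi := g^~ y)) => // x1 x2 b1 b2 b12.
  by rewrite -lecR_normc; apply: g_add.1.
have split_y i : normc (g (P i) y - \sum_k g (P i) (Q k)) <= d.-1%:R * th.
  apply: (almost_additive_coord_approx (phi := g (P i))) => // x1 x2 b1 b2 b12.
  by rewrite -lecR_normc; apply: g_add.2 => //; exact/box_scale_ebasis/bx.
have hyers_ik i k :
    normc (g (P i) (Q k) - bihyers T (coord_proj i k) (x ord0 i) (y ord0 k)) <= 6 * th.
  exact: (bihyers_approx T_gt0 (coord_proj_addl i k) (coord_proj_addr i k)).
have -> : g x y - bihyers_sum x y = (g x y - \sum_i g (P i) y) +
    \sum_i (g (P i) y - \sum_k g (P i) (Q k)) +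
    \sum_i \sum_k (g (P i) (Q k) - bihyers T (coord_proj i k) (x ord0 i) (y ord0 k)).
  rewrite /bihyers_sum sumrB; under [X in _ = _ + X]eq_bigr do rewrite sumrB.
  by rewrite sumrB; ring.
apply: le_trans (le_normcD _ _) _; apply: le_trans (lerD (le_normcD _ _) (lexx _)) _.
have := normc_sum_le split_y; have := normc_sum_le (fun i => normc_sum_le (hyers_ik i)).
rewrite card_ord; move: split_x.
have -> : ((7 * d ^ 2)%N%:R - 1) * th =
    d.-1%:R * th + d%:R * (d.-1%:R * th) + d%:R * (d%:R * (6 * th)).
  by case: d d_gt0 {bx bY P Q split_y hyers_ik} => // n _ /=; rewrite natrM natrX -natr1; ring.
lra.
Qed.

Lemma bihyers_sum_bilin_form :
  (forall i k : 'I_d, exists a b : R, (-T <= a < T) /\ (-T <= b < T) /\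
     (fun p : R * R => coord_proj i k p.1 p.2)
       @ within [set p : R * R | -T <= p.1 < T /\ -T <= p.2 < T] (nbhs (a, b))
       --> coord_proj i k a b) ->
  bihyers_sum = bilin_form (fun i k => bihyers T (coord_proj i k) 1 1).
Proof.
move=> proj_cvg; apply/funext => x; apply/funext => y.
apply: eq_bigr => i _; apply: eq_bigr => k _.
have [a [b [Ia [Ib cvg_ab]]]] := proj_cvg i k.
by rewrite (bihyers_bilinear T_gt0 (coord_proj_addl i k) (coord_proj_addr i k) Ia Ib cvg_ab).
Qed.

Definition bihyers_symm (x y : 'rV[R]_d) : C := (bihyers_sum x y + bihyers_sum y x) / 2.

Lemma bihyers_symm_biadditive E : biadditive_on E bihyers_symm.
Proof.
apply: biadditive_on_morph => [y x1 x2 | x y1 y2];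
  by rewrite /bihyers_symm (bihyers_sumDl, bihyers_sumDr) (bihyers_sumDl, bihyers_sumDr); field.
Qed.

Lemma bihyers_symm_approx x y : symmetric_on box g -> (0 < d)%N -> box x -> box y ->
  normc (g x y - bihyers_symm x y) <= ((7 * d ^ 2)%N%:R - 1) * th.
Proof.
move=> g_sym d_gt0 bx bY.
have -> : g x y - bihyers_symm x y = ((g x y - bihyers_sum x y) + (g y x - bihyers_sum y x)) / 2.
  by rewrite /bihyers_symm -(g_sym _ _ bx bY); field.
rewrite Normc.normcM Normc.normcV -[2]/(1 *+ 2) normcMn Normc.normc1.
have := le_normcD (g x y - bihyers_sum x y) (g y x - bihyers_sum y x).
have := bihyers_sum_approx d_gt0 bx bY; have := bihyers_sum_approx d_gt0 bY bx.
lra.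
Qed.

End Box.

Theorem lemma15 (R : realType) (d : nat) (T theta : R)
  (g : 'rV[R]_d -> 'rV[R]_d -> R[i]) :
  (0 < d)%N -> 0 < T -> 0 <= theta ->
  symmetric_on (box d T) g ->
  biadditive_approx (box d T) theta g ->
  exists G : 'rV[R]_d -> 'rV[R]_d -> R[i],
    [/\ symmetric_on (box d T) G,
        biadditive_on (box d T) G,
        (forall x y, box d T x -> box d T y ->
           `|g x y - G x y| <= (((((7 * d ^ 2)%N)%:R - 1) * theta)%:C)%C) &
        ((forall i k : 'I_d, exists a b : R,
            (-T <= a < T) /\ (-T <= b < T) /\
            (fun p : R * R => g (p.1 *: ebasis i) (p.2 *: ebasis k))
              @ within [set p : R * R | -T <= p.1 < T /\ -T <= p.2 < T] (nbhs (a, b))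
              --> g (a *: ebasis i) (b *: ebasis k)) ->
         {within [set p : 'rV[R]_d * 'rV[R]_d | box d T p.1 /\ box d T p.2],
            continuous (fun p => G p.1 p.2)} /\
         bilinear_on (box d T) G)].
Proof.
move=> d_gt0 T_gt0 _ g_sym g_add.
exists (bihyers_symm T g); split.
- by move=> x y _ _; rewrite /bihyers_symm addrC.
- exact: bihyers_symm_biadditive T_gt0 g_add _.
- move=> x y bx bY; rewrite lecR_normc.
  exact: bihyers_symm_approx T_gt0 g_add _ _ g_sym d_gt0 bx bY.
move=> proj_cvg.
pose beta i k := bihyers T (coord_proj g i k) 1 1.
have -> : bihyers_symm T g = bilin_form (fun i k => (beta i k + beta k i) / 2).
  apply/funext => x; apply/funext => y.
  by rewrite /bihyers_symm (bihyers_sum_bilin_form T_gt0 g_add proj_cvg) bilin_form_symmetrize.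
split; last exact: bilin_form_bilinear_on.
exact/continuous_subspaceT/continuous_bilin_form.
Qed.
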